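(* Let $\beta$ be a totally positive quadratic integer satisfying \[ \operatorname{Tr}\beta \leq \operatorname{Nm}\beta < 2\operatorname{Tr}\beta - 4. \] Then for every integer $n \geq 0$, $p_\beta\big((\operatorname{Tr}\beta)\beta^n\big) = n+1$.
   Context: A quadratic integer is a root of a monic irreducible quadratic polynomial in $\mathbb{Z}[x]$; it is totally positive if both it and its conjugate $\beta'$ are positive real numbers. $\operatorname{Tr}\beta = \beta + \beta'$ and $\operatorname{Nm}\beta = \beta\beta'$. For $\alpha \in \mathbb{C}$, $p_\beta(\alpha) \in \mathbb{Z}_{\geq 0}\cup\{\infty\}$ is the number of polynomials $f \in \mathbb{Z}_{\geq 0}[x]$ (non-negative integer coefficients) with $f(\beta) = \alpha$. *)

From mathcomp Require Import all_boot all_order all_algebra.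
From mathcomp Require Import reals.
Set Implicit Arguments. Unset Strict Implicit. Unset Printing Implicit Defensive.
Import Order.TTheory GRing.Theory Num.Theory.
Local Open Scope ring_scope.

Definition polyZ (R : nzRingType) (p : {poly int}) : {poly R} :=
  map_poly (fun z : int => z%:~R) p.

(* beta (a real number) is a quadratic integer with minimal polynomial p :
   p is a monic irreducible quadratic polynomial in Z[x] with p(beta) = 0.
   (For monic p, irreducibility in Z[x] is the same as over Q.) *)
Definition quad_int_minpoly (R : realType) (p : {poly int}) (beta : R) : Prop :=
  [/\ p \is monic, size p = 3%N,
      irreducible_poly (polyZ rat p) & root (polyZ R p) beta].

(* The conjugate beta' of beta: the other root of p = x^2 + p_1 x + p_0,
   i.e. beta' = -p_1 - beta. *)
Definition qconj (R : realType) (p : {poly int}) (beta : R) : R :=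
  - (p`_1)%:~R - beta.

Definition qtr (R : realType) (p : {poly int}) (beta : R) : R :=
  beta + qconj p beta.
Definition qnm (R : realType) (p : {poly int}) (beta : R) : R :=
  beta * qconj p beta.

Definition totally_positive (R : realType) (p : {poly int}) (beta : R) : Prop :=
  0 < beta /\ 0 < qconj p beta.

Definition nonneg_repr (R : realType) (beta alpha : R) (f : {poly int}) : Prop :=
  (forall i, 0 <= f`_i) /\ (polyZ R f).[beta] = alpha.

(* p_beta(alpha) = k (finite): exactly k polynomials represent alpha. *)
Definition p_count_eq (R : realType) (beta alpha : R) (k : nat) : Prop :=
  exists s : seq {poly int},
    [/\ uniq s, size s = k & forall f, f \in s <-> nonneg_repr beta alpha f].

From mathcomp Require Import all_boot all_order all_algebra.
From mathcomp Require Import reals.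
From mathcomp Require Import ring lra zify.
Import Order.TTheory GRing.Theory Num.Theory.
Set Implicit Arguments. Unset Strict Implicit.
Local Open Scope ring_scope.

(* Write t = Tr beta and m = Nm beta, so that beta and its conjugate are the
   roots of X^2 - t X + m.  As (beta - 2)(beta' - 2) = m - 2 t + 4 < 0, one
   root A exceeds 2 and the other root B lies in (0, 2).  A representation f
   of a beta^n, where t <= a <= m, satisfies f(A) = a A^n and f(B) = a B^n.
   At A, the bound a <= A B < 2 A forces deg f <= n + 1 and a coefficient at
   most 1 on X^(n+1).  For nonnegative coefficients and deg f <= N the ratio
   f(x) / x^N is nonincreasing, so comparing it at A and B shows that either
   f = a X^n, or f has leading term X^(n+1) and a coefficient at least a - t
   on X^n; then f - X^(n+1) - (a - t) X^n represents m beta^(n-1), since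
   beta^2 = t beta - m.  Induction on n yields exactly n + 1 representations
   of t beta^n. *)

Local Notation ev f x := ((polyZ _ f).[x]).

Section Evaluation.
Variable R : comNzRingType.
Implicit Types (f g : {poly int}) (x : R).

Lemma evD f g x : ev (f + g) x = ev f x + ev g x.
Proof. by rewrite /polyZ rmorphD hornerD. Qed.

Lemma evB f g x : ev (f - g) x = ev f x - ev g x.
Proof. by rewrite /polyZ rmorphB hornerD hornerN. Qed.

Lemma evM f g x : ev (f * g) x = ev f x * ev g x.
Proof. by rewrite /polyZ rmorphM hornerM. Qed.

Lemma evX n x : ev 'X^n x = x ^+ n.
Proof. by rewrite /polyZ map_polyXn hornerXn. Qed.

Lemma evCX (c : int) n x : ev (c%:P * 'X^n) x = c%:~R * x ^+ n.
Proof. by rewrite /polyZ rmorphM /= map_polyC map_polyXn hornerCM hornerXn. Qed.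

Lemma ev_sum f x N : (size f <= N)%N -> ev f x = \sum_(i < N) (f`_i)%:~R * x ^+ i.
Proof.
move=> leN; rewrite /polyZ (horner_coef_wide (n := N)).
  by apply: eq_bigr => i _; rewrite coef_map.
by rewrite map_polyE (leq_trans (size_Poly _)) ?size_map.
Qed.

End Evaluation.

Lemma coef_horner_le (R : numDomainType) (f : {poly int}) (x : R) i :
  0 <= x -> (forall j, 0 <= f`_j) -> (f`_i)%:~R * x ^+ i <= ev f x.
Proof.
move=> x_ge0 f_ge0.
have le_size : (size f <= maxn (size f) i.+1)%N by rewrite leq_maxl.
have lt_i : (i < maxn (size f) i.+1)%N by rewrite leq_max ltnSn orbT.
rewrite (ev_sum _ le_size) (bigD1 (Ordinal lt_i)) //= lerDl.
by apply: sumr_ge0 => j _; rewrite mulr_ge0 ?ler0z ?exprn_ge0.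
Qed.

Section Ratio.
Variables (R : realDomainType) (A B : R).
Hypotheses (B_gt0 : 0 < B) (B_lt_A : B < A).

Let A_gt0 : 0 < A := lt_trans B_gt0 B_lt_A.

Lemma cross_exprE i N : (i <= N)%N ->
  B ^+ i * A ^+ N - A ^+ i * B ^+ N = (A ^+ i * B ^+ i) * (A ^+ (N - i) - B ^+ (N - i)).
Proof. by move=> le_iN; rewrite -{1 2}(subnKC le_iN) !exprD; ring. Qed.

Lemma cross_expr_ge0 i N : (i <= N)%N -> 0 <= B ^+ i * A ^+ N - A ^+ i * B ^+ N.
Proof.
move=> le_iN; rewrite cross_exprE // mulr_ge0 //.
  by rewrite mulr_ge0 // exprn_ge0 // ltW.
by rewrite subr_ge0 lerXn2r ?nnegrE ?ltW.
Qed.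

Lemma cross_expr_gt0 i N : (i < N)%N -> 0 < B ^+ i * A ^+ N - A ^+ i * B ^+ N.
Proof.
move=> lt_iN; rewrite cross_exprE ?(ltnW lt_iN) // mulr_gt0 ?mulr_gt0 ?exprn_gt0 //.
by rewrite subr_gt0 ltrXn2r ?ltW // -lt0n subn_gt0.
Qed.

Lemma horner_cross_sum (f : {poly int}) N : (size f <= N.+1)%N ->
  ev f B * A ^+ N - ev f A * B ^+ N =
  \sum_(i < N.+1) (f`_i)%:~R * (B ^+ i * A ^+ N - A ^+ i * B ^+ N).
Proof.
move=> leN; rewrite !(ev_sum _ leN) !mulr_suml -sumrB.
by apply: eq_bigr => i _; ring.
Qed.

Lemma horner_ratio_le (f : {poly int}) N :
  (forall i, 0 <= f`_i) -> (size f <= N.+1)%N ->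
  ev f A * B ^+ N <= ev f B * A ^+ N.
Proof.
move=> f_ge0 leN; rewrite -subr_ge0 (horner_cross_sum leN).
by apply: sumr_ge0 => i _; rewrite mulr_ge0 ?ler0z // cross_expr_ge0 // -ltnS.
Qed.

Lemma horner_ratio_eq (f : {poly int}) N :
  (forall i, 0 <= f`_i) -> (size f <= N.+1)%N ->
  ev f A * B ^+ N = ev f B * A ^+ N -> f = (f`_N)%:P * 'X^N.
Proof.
move=> f_ge0 leN eq_ratio.
have terms_ge0 (i : 'I_N.+1) : true ->
    0 <= (f`_i)%:~R * (B ^+ i * A ^+ N - A ^+ i * B ^+ N).
  by move=> _; rewrite mulr_ge0 ?ler0z // cross_expr_ge0 // -ltnS.
have sum_eq0 := horner_cross_sum leN; rewrite eq_ratio subrr in sum_eq0.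
apply/polyP => i; rewrite coefCM coefXn.
have [lt_iN|gt_iN|->] := ltngtP i N; last by rewrite mulr1.
- have /eqP := psumr_eq0P terms_ge0 (esym sum_eq0) (i := Ordinal (leqW lt_iN)) isT.
  by rewrite mulf_eq0 (gt_eqF (cross_expr_gt0 lt_iN)) orbF intr_eq0 mulr0 => /eqP.
- by rewrite mulr0 (leq_sizeP _ _ leN).
Qed.

End Ratio.

Lemma poly_take_top (T : nzSemiRingType) (g : {poly T}) n : (size g <= n.+2)%N ->
  g = take_poly n.+1 g + (g`_n.+1)%:P * 'X^(n.+1).
Proof.
move=> le_size; rewrite -{1}(poly_take_drop n.+1 g); congr (_ + _ * _).
rewrite [drop_poly _ _]size1_polyC ?coef_drop_poly //.
by rewrite size_drop_poly leq_subLR addn1.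
Qed.

Section DegreeBound.
Variables (R : realDomainType) (A : R) (a : int) (n : nat) (f : {poly int}).
Hypotheses (A_ge2 : 2 <= A) (a_lt : a%:~R < 2 * A).
Hypotheses (f_ge0 : forall i, 0 <= f`_i) (fA : ev f A = a%:~R * A ^+ n).

Let A_gt0 : 0 < A. Proof. exact: lt_le_trans A_ge2. Qed.

Lemma coef_horner_lt i : (f`_i)%:~R * A ^+ i < 2 * A ^+ n.+1.
Proof.
apply: le_lt_trans (coef_horner_le i (ltW A_gt0) f_ge0) _.
by rewrite fA exprS mulrA ltr_pM2r ?exprn_gt0.
Qed.

Lemma coef_high_eq0 i : (n.+2 <= i)%N -> f`_i = 0.
Proof.
move=> le_i; have Ai_gt0 : 0 < A ^+ i := exprn_gt0 i A_gt0.
suff : (f`_i)%:~R * A ^+ i < 1 * A ^+ i by rewrite ltr_pM2r // ltrz1; have := f_ge0 i; lia.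
apply: lt_le_trans (coef_horner_lt i) _; rewrite mul1r.
apply: le_trans (_ : _ <= A ^+ n.+2) _; first by rewrite [X in _ <= X]exprS ler_pM2r ?exprn_gt0.
by rewrite ler_eXn2l // (lt_le_trans _ A_ge2) ?ltr1n.
Qed.

Lemma coef_succ_le1 : f`_n.+1 <= 1.
Proof.
have := coef_horner_lt n.+1; rewrite ltr_pM2r ?exprn_gt0 //.
by rewrite -[2]/(2%:~R : R) ltr_int; lia.
Qed.

End DegreeBound.

Section Monomial.
Variables (R : realDomainType) (A B : R).
Hypotheses (B_gt0 : 0 < B) (B_lt_A : B < A).
Implicit Types f g : {poly int}.

Let A_gt0 : 0 < A := lt_trans B_gt0 B_lt_A.

Lemma monomial_of_horner_eq (a : int) n f : (forall i, 0 <= f`_i) ->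
  (size f <= n.+1)%N -> ev f A = a%:~R * A ^+ n -> ev f B = a%:~R * B ^+ n ->
  f = a%:P * 'X^n.
Proof.
move=> f_ge0 le_size fA fB.
have f_mono : f = (f`_n)%:P * 'X^n.
  by apply: (horner_ratio_eq B_gt0 B_lt_A f_ge0 le_size); rewrite fA fB; ring.
have fnA : (f`_n)%:~R * A ^+ n = a%:~R * A ^+ n by rewrite -fA {2}f_mono evCX.
by rewrite f_mono (intr_inj (mulIf (expf_neq0 n (lt0r_neq0 A_gt0)) fnA)).
Qed.

Lemma coef_top_ge0 (c : int) n g : (size g <= n.+2)%N ->
  (forall i, (i <= n)%N -> 0 <= g`_i) ->
  ev g A = c%:~R * A ^+ n -> ev g B = c%:~R * B ^+ n -> 0 <= g`_n.+1.
Proof.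
move=> le_size g_ge0 gA gB; set h := take_poly n.+1 g; set k := g`_n.+1.
have h_ge0 i : 0 <= h`_i by rewrite coef_take_poly; case: ltnP => // /g_ge0.
have hE (y : R) : ev h y = ev g y - k%:~R * y ^+ n.+1.
  by rewrite [in RHS](poly_take_top le_size) evD evCX addrK.
have := horner_ratio_le B_gt0 B_lt_A h_ge0 (size_take_poly n.+1 g).
rewrite !hE gA gB -subr_ge0.
have -> : (c%:~R * B ^+ n - k%:~R * B ^+ n.+1) * A ^+ n
          - (c%:~R * A ^+ n - k%:~R * A ^+ n.+1) * B ^+ n
        = k%:~R * (A ^+ n * B ^+ n * (A - B)) by rewrite !exprS; ring.
by rewrite pmulr_lge0 ?ler0z // !mulr_gt0 ?exprn_gt0 ?subr_gt0.
Qed.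

End Monomial.

Lemma expr_root (R : comNzRingType) (t m : int) (y : R) n :
  y ^+ 2 = t%:~R * y - m%:~R -> y ^+ n.+2 = t%:~R * y ^+ n.+1 - m%:~R * y ^+ n.
Proof. by move=> y2; rewrite !exprS mulrA -expr2 y2; ring. Qed.

(* [reprs t m a n] lists the representations of [a * y ^ n] for a root [y] of
   [X^2 - t X + m]: the monomial [a X^n] and, for [n > 0], the polynomials
   [X^(n+1) + (a - t) X^n + g] with [g] a representation of [m * y ^ (n-1)]. *)
Fixpoint reprs (t m a : int) (n : nat) : seq {poly int} :=
  a%:P * 'X^n :: if n is n'.+1 then
    [seq 'X^(n.+1) + (a - t)%:P * 'X^n + g | g <- reprs t m m n'] else [::].

Section Reprs.
Variables t m : int.
Implicit Types (a : int) (f : {poly int}).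

Lemma size_reprs a n : size (reprs t m a n) = n.+1.
Proof. by elim: n a => [|n IH] a //=; rewrite size_map IH. Qed.

Lemma size_mem_reprs a n f : f \in reprs t m a n -> (size f <= n.+2)%N.
Proof.
have size_CX a' k : (size (a'%:P * 'X^k)%R <= k.+2)%N.
  by apply/leq_sizeP => j lt_j; rewrite coefCM coefXn gtn_eqF ?mulr0 // ltnW.
elim: n a f => [|n IH] a f /=; first by rewrite inE => /eqP ->.
rewrite inE => /orP[/eqP -> //|/mapP[g /IH g_size ->]].
apply/leq_sizeP => j lt_j; rewrite !coefE (leq_sizeP _ _ g_size) ?(ltnW lt_j) //.
by rewrite !gtn_eqF // ?(ltn_trans _ lt_j) // mulr0 !addr0.
Qed.

Lemma reprs_uniq a n : uniq (reprs t m a n).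
Proof.
elim: n a => [|n IH] a //=; rewrite map_inj_uniq ?IH ?andbT; last by move=> f g /addrI.
apply/mapP => -[g /size_mem_reprs g_size /(congr1 (fun f => f`_n.+2))].
rewrite !coefD !coefCM !coefXn (leq_sizeP _ _ g_size) // eqxx !gtn_eqF // !mulr0 !addr0.
by move/eqP; rewrite eq_sym oner_eq0.
Qed.

Lemma reprs_coef_ge0 a n f : 0 <= t -> t <= m -> t <= a ->
  f \in reprs t m a n -> forall i, 0 <= f`_i.
Proof.
move=> t_ge0 t_le_m; elim: n a f => [|n IH] a f t_le_a /=.
  by rewrite inE => /eqP -> i; rewrite coefCM coefXn mulr_ge0 ?ler0n ?(le_trans t_ge0).
rewrite inE => /orP[/eqP -> i|/mapP[g /(IH _ _ t_le_m) g_ge0 -> i]].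
  by rewrite coefCM coefXn mulr_ge0 ?ler0n ?(le_trans t_ge0).
by rewrite !coefE !addr_ge0 ?ler0n ?mulr_ge0 ?ler0n ?subr_ge0.
Qed.

Lemma horner_reprs (R : comNzRingType) (y : R) a n f : y ^+ 2 = t%:~R * y - m%:~R ->
  f \in reprs t m a n -> ev f y = a%:~R * y ^+ n.
Proof.
move=> y2; elim: n a f => [|n IH] a f /=; first by rewrite inE => /eqP ->; rewrite evCX.
rewrite inE => /orP[/eqP ->|/mapP[g /IH gy ->]]; first by rewrite evCX.
by rewrite !evD evX evCX gy (expr_root n y2); ring.
Qed.

Lemma horner_peel (R : comNzRingType) (y : R) a n f :
  y ^+ 2 = t%:~R * y - m%:~R -> ev f y = a%:~R * y ^+ n.+1 ->
  ev (f - 'X^(n.+2) - (a - t)%:P * 'X^(n.+1)) y = m%:~R * y ^+ n.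
Proof. by move=> y2 fy; rewrite !evB evX evCX fy (expr_root n y2); ring. Qed.

End Reprs.

Section Classification.
Variables (R : realFieldType) (t m : int) (A B : R).
Hypotheses (B_gt0 : 0 < B) (B_lt2 : B < 2) (A_gt2 : 2 < A).
Hypotheses (sumAB : A + B = t%:~R) (prodAB : A * B = m%:~R).
Implicit Types (a : int) (f : {poly int}).

Let B_lt_A : B < A := lt_trans B_lt2 A_gt2.
Let A_gt0 : 0 < A := lt_trans B_gt0 B_lt_A.
Let rootA : A ^+ 2 = t%:~R * A - m%:~R. Proof. by rewrite -sumAB -prodAB; ring. Qed.
Let rootB : B ^+ 2 = t%:~R * B - m%:~R. Proof. by rewrite -sumAB -prodAB; ring. Qed.

Lemma horner_eq_cases a n f : a <= m -> (forall i, 0 <= f`_i) ->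
  ev f A = a%:~R * A ^+ n -> ev f B = a%:~R * B ^+ n ->
  f = a%:P * 'X^n \/ (size f <= n.+2)%N /\ f`_n.+1 = 1.
Proof.
move=> a_le_m f_ge0 fA fB.
have a_lt : a%:~R < 2 * A.
  apply: le_lt_trans (_ : _ <= A * B) _; first by rewrite prodAB ler_int.
  by rewrite mulrC ltr_pM2r.
have f_high := coef_high_eq0 (ltW A_gt2) a_lt f_ge0 fA.
have size_f : (size f <= n.+2)%N by apply/leq_sizeP.
have [f_top|f_top] : f`_n.+1 = 0 \/ f`_n.+1 = 1.
  by have := coef_succ_le1 (ltW A_gt2) a_lt f_ge0 fA; have := f_ge0 n.+1; lia.
- left; apply: (monomial_of_horner_eq B_gt0 B_lt_A f_ge0 _ fA fB).
  apply/leq_sizeP => j; rewrite leq_eqVlt => /orP[/eqP <- //|]; exact: f_high.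
- by right.
Qed.

Lemma peel_coef_ge0 a n f : (forall i, 0 <= f`_i) -> (size f <= n.+3)%N ->
  f`_n.+2 = 1 -> ev f A = a%:~R * A ^+ n.+1 -> ev f B = a%:~R * B ^+ n.+1 ->
  forall i, 0 <= (f - 'X^(n.+2) - (a - t)%:P * 'X^(n.+1))`_i.
Proof.
move=> f_ge0 size_f f_top fA fB; set g := _ - _ * _.
have g_low i : (i <= n)%N -> g`_i = f`_i.
  by move=> le_in; rewrite !coefB coefCM !coefXn !ltn_eqF ?mulr0n ?mulr0 ?subr0 // ltnS leqW.
have g_top : g`_n.+2 = 0.
  by rewrite !coefB coefCM !coefXn eqxx gtn_eqF // f_top mulr0n mulr0 subr0 subrr.
have size_g : (size g <= n.+2)%N.
  apply/leq_sizeP => j; rewrite leq_eqVlt => /orP[/eqP <- //|lt_j].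
  rewrite !coefB coefCM !coefXn (leq_sizeP _ _ size_f) // !gtn_eqF ?mulr0n ?mulr0 ?subrr //.
  exact: ltn_trans lt_j.
have g_ge0 i : (i <= n)%N -> 0 <= g`_i by move=> le_in; rewrite g_low.
have := coef_top_ge0 B_gt0 B_lt_A size_g g_ge0 (horner_peel rootA fA) (horner_peel rootB fB).
move=> g_top_ge0 i; case: (ltngtP i n.+1) => [lt_i|gt_i|-> //]; first exact: g_ge0.
by rewrite (leq_sizeP _ _ size_g).
Qed.

Lemma reprs_complete n a f : a <= m -> (forall i, 0 <= f`_i) ->
  ev f A = a%:~R * A ^+ n -> ev f B = a%:~R * B ^+ n -> f \in reprs t m a n.
Proof.
elim: n a f => [|n IH] a f a_le_m f_ge0 fA fB.
  have [->|[size_f f1]] := horner_eq_cases a_le_m f_ge0 fA fB; first exact: mem_head.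
  have fE (y : R) : ev f y = (f`_0)%:~R + y.
    by rewrite (ev_sum _ size_f) !big_ord_recr big_ord0 /= f1; ring.
  by move: fA fB; rewrite !fE !expr0 !mulr1 => <- /addrI/eqP; rewrite (lt_eqF B_lt_A).
have [->|[size_f f_top]] := horner_eq_cases a_le_m f_ge0 fA fB; first exact: mem_head.
rewrite inE; apply/orP; right; apply/mapP.
exists (f - 'X^(n.+2) - (a - t)%:P * 'X^(n.+1)); last by ring.
apply: IH (lexx m) (peel_coef_ge0 f_ge0 size_f f_top fA fB) _ _; exact: horner_peel.
Qed.

End Classification.

Lemma reprs_complete_sym (R : realFieldType) (t m : int) (x y : R) n (f : {poly int}) :
  0 < x -> 0 < y -> x != y -> x + y = t%:~R -> x * y = m%:~R -> t <= m ->
  m%:~R < 2 * t%:~R - 4 :> R -> (forall i, 0 <= f`_i) ->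
  ev f x = t%:~R * x ^+ n -> ev f y = t%:~R * y ^+ n -> f \in reprs t m t n.
Proof.
move=> x_gt0 y_gt0 neq_xy sum_xy prod_xy t_le_m m_lt f_ge0.
wlog lt_yx : x y x_gt0 y_gt0 neq_xy sum_xy prod_xy / y < x.
  move=> base fx fy; case: (ltgtP y x) => [lt_yx|lt_xy|eq_yx].
  - exact: (base x y).
  - by apply: (base y x) => //; [rewrite eq_sym | rewrite addrC | rewrite mulrC].
  - by rewrite eq_yx eqxx in neq_xy.
(* [(x - 2) (y - 2) = m - 2 t + 4 < 0] separates the two roots by [2]. *)
have sep : (x - 2) * (y - 2) < 0.
  have -> : (x - 2) * (y - 2) = x * y - 2 * (x + y) + 4 by ring.
  by rewrite prod_xy sum_xy; lra.
have y_lt2 : y < 2 by nra.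
have x_gt2 : 2 < x by nra.
exact: (reprs_complete y_gt0 y_lt2 x_gt2 sum_xy prod_xy t_le_m).
Qed.

Section QuadraticInteger.
Variables (R : realType) (p : {poly int}) (beta : R).
Hypothesis beta_quad : quad_int_minpoly p beta.
Implicit Types f g : {poly int}.

Lemma qtrE : qtr p beta = (- p`_1)%:~R.
Proof. by rewrite /qtr /qconj rmorphN; ring. Qed.

Lemma horner_quad_minpoly (y : R) : ev p y = (p`_0)%:~R + (p`_1)%:~R * y + y ^+ 2.
Proof.
have [p_monic p_size _ _] := beta_quad.
have p2 : p`_2 = 1 by move/monicP: p_monic; rewrite lead_coefE p_size.
by rewrite (ev_sum y (eq_leq p_size)) !big_ord_recr big_ord0 /= p2; ring.
Qed.

Lemma qconj_root : ev p (qconj p beta) = 0.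
Proof.
have [_ _ _ /rootP <-] := beta_quad.
by rewrite !horner_quad_minpoly /qconj; ring.
Qed.

Lemma qnmE : qnm p beta = (p`_0)%:~R.
Proof.
have [_ _ _ /rootP p_root] := beta_quad.
by rewrite /qnm /qconj -[RHS]subr0 -p_root horner_quad_minpoly; ring.
Qed.

Lemma quad_int_irrational (r0 r1 : int) : r0%:~R + r1%:~R * beta = 0 -> r1 = 0.
Proof.
have [_ p_size p_irr p_root] := beta_quad.
move=> lin_root; have [//|r1_neq0] := eqVneq r1 0; exfalso.
have r1R : r1%:~R != 0 :> R by rewrite intr_eq0.
pose q : rat := - r0%:~R / r1%:~R.
have qE : ratr q = beta.
  rewrite fmorph_div rmorphN /= !ratr_int; apply: (mulIf r1R); rewrite divfK //.
  by rewrite -[LHS]addr0 -lin_root; ring.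
have pE : polyZ R p = map_poly ratr (polyZ rat p).
  by rewrite /polyZ -map_poly_comp; apply: eq_map_poly => z /=; rewrite ratr_int.
have q_root : root (polyZ rat p) q.
  by move: p_root; rewrite pE -qE /root horner_map fmorph_eq0.
have := p_irr.2 ('X - q%:P); rewrite size_XsubC dvdp_XsubCl => /(_ isT q_root) /eqp_size.
by rewrite size_XsubC /polyZ size_map_inj_poly ?p_size //; exact: intr_inj.
Qed.

Lemma qconj_neq : beta != qconj p beta.
Proof.
apply/eqP => eq_conj.
have lin : (p`_1)%:~R + (2 : int)%:~R * beta = 0.
  by rewrite -(subrr beta) {3}eq_conj /qconj; ring.
by move/quad_int_irrational/eqP: lin.
Qed.

(* Reduce [f - g] modulo the minimal polynomial: the remainder is linear with
   root [beta], hence zero by irrationality. *)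
Lemma horner_qconj f g :
  ev f beta = ev g beta -> ev f (qconj p beta) = ev g (qconj p beta).
Proof.
have [p_monic p_size _ /rootP p_root] := beta_quad.
move=> fg; apply/eqP; rewrite -subr_eq0 -evB; set h := f - g.
set r := Pdiv.CommonRing.rmodp h p.
have hE : h = Pdiv.CommonRing.rdivp h p * p + r := Pdiv.RingMonic.rdivp_eq p_monic h.
have r_size : (size r <= 2)%N.
  by have := Pdiv.CommonRing.ltn_rmodpN0 h (monic_neq0 p_monic); rewrite p_size.
have rE (y : R) : ev r y = (r`_0)%:~R + (r`_1)%:~R * y.
  by rewrite (ev_sum _ r_size) !big_ord_recr big_ord0 /=; ring.
have r_root : ev r beta = 0.
  have h_root : ev h beta = 0 by rewrite /h evB fg subrr.
  by move: h_root; rewrite {1}hE evD evM p_root mulr0 add0r.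
have r1_eq0 : r`_1 = 0 by apply: (quad_int_irrational (r0 := r`_0)); rewrite -rE.
have r0_eq0 : (r`_0)%:~R = 0 :> R by move: r_root; rewrite rE r1_eq0 mul0r addr0.
by rewrite hE evD evM qconj_root mulr0 add0r rE r1_eq0 r0_eq0 mul0r addr0.
Qed.

End QuadraticInteger.

Theorem theorem2 (R : realType) (p : {poly int}) (beta : R)
  (hq : quad_int_minpoly p beta)
  (htp : totally_positive p beta)
  (h1 : qtr p beta <= qnm p beta)
  (h2 : qnm p beta < 2 * qtr p beta - 4) :
  forall n : nat, p_count_eq beta (qtr p beta * beta ^+ n) n.+1.
Proof.
move=> n; have [beta_gt0 conj_gt0] := htp.
set t := - p`_1; set m := p`_0.
have sum_conj : beta + qconj p beta = t%:~R := qtrE p beta.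
have prod_conj : beta * qconj p beta = m%:~R := qnmE hq.
have root_beta : beta ^+ 2 = t%:~R * beta - m%:~R by rewrite -sum_conj -prod_conj; ring.
rewrite qtrE qnmE // in h1 h2 *.
have t_le_m : t <= m by rewrite -(ler_int R).
have t_ge0 : 0 <= t by rewrite -(ler_int R) -sum_conj; lra.
exists (reprs t m t n); split; [exact: reprs_uniq | exact: size_reprs | move=> f].
split=> [f_mem | [f_ge0 f_beta]].
  by split; [exact: reprs_coef_ge0 f_mem | exact: horner_reprs f_mem].
have f_conj : ev f (qconj p beta) = t%:~R * qconj p beta ^+ n.
  by rewrite (horner_qconj hq (g := t%:P * 'X^n)) evCX.
exact: reprs_complete_sym beta_gt0 conj_gt0 (qconj_neq hq) sum_conj prod_conj
  t_le_m h2 f_ge0 f_beta f_conj.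
Qed.
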